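(* Let $(r_k)_{k\in\mathbb N}$ be non-negative real numbers and let $A\in(0,1/2)$ and $B,C,D\ge0$ be constants such that for all $k$, \[r_{k+1}^2\le\Big(\big((1-A)r_k^2+B\big)^{1/2}+C\Big)^2+D.\] Then for all $k$, \[r_k\le\sqrt2\Big(1-\frac A2\Big)^k(r_0+\sqrt B)+\frac{2\sqrt2C}{A}+2\sqrt{\frac{D+B}{A}}.\] *)

From Stdlib Require Export Reals.

(** The bound [M k] on the right-hand side satisfies
    [M (S k) = (1 - A/2) M k + sqrt 2 C + A s] with [s = sqrt ((D + B) / A)],
    and [M k >= 2 s] always.  On [t >= 2 s] the one-step map
    [t |-> sqrt ((sqrt ((1 - A) t^2 + B) + C)^2 + D)] is bounded by the affine
    map [t |-> (1 - A/2) t + A s + C], because the drift term [2 (1 - A/2) A s t]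
    absorbs [B + D = A s^2].  Since the one-step map is monotone, [r k <= M k]
    follows by induction. *)

From Stdlib Require Import Reals.
From Stdlib Require Import Lra Psatz.
Open Scope R_scope.

Lemma le_seq_of_monotone_step (f : R -> R) (r M : nat -> R) :
  (forall t u, 0 <= t <= u -> f t <= f u) ->
  (forall k, 0 <= r k) ->
  (forall k, r (S k) <= f (r k)) ->
  (forall k, f (M k) <= M (S k)) ->
  r 0%nat <= M 0%nat ->
  forall k, r k <= M k.
Proof.
  intros f_mono r_ge0 r_step M_step r0_le k.
  induction k as [|k IH]; [exact r0_le|].
  apply Rle_trans with (f (r k)); [apply r_step|].
  apply Rle_trans with (f (M k)); [apply f_mono; split; auto|apply M_step].
Qed.

Lemma pow2_add_le_of_pow2_le (x y c d : R) :
  0 <= x -> 0 <= y -> 0 <= c -> 0 <= d ->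
  x ^ 2 + d <= y ^ 2 -> (x + c) ^ 2 + d <= (y + c) ^ 2.
Proof.
  intros x_ge0 y_ge0 c_ge0 d_ge0 sq_le.
  assert (x_le_y : x <= y) by nra.
  nra.
Qed.

Lemma sqrt2_ge1 : 1 <= sqrt 2.
Proof. rewrite <- sqrt_1. apply sqrt_le_1_alt. lra. Qed.

Section Recursion.

Variables A B C D : R.
Hypotheses (A_gt0 : 0 < A) (A_le1 : A <= 1).
Hypotheses (B_ge0 : 0 <= B) (C_ge0 : 0 <= C) (D_ge0 : 0 <= D).

Definition step (t : R) : R := sqrt ((sqrt ((1 - A) * t ^ 2 + B) + C) ^ 2 + D).

Definition threshold : R := sqrt ((D + B) / A).

Lemma step_monotone (t u : R) : 0 <= t <= u -> step t <= step u.
Proof.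
  intros [t_ge0 t_le_u].
  unfold step.
  apply sqrt_le_1_alt, Rplus_le_compat_r, pow_incr.
  split; [pose proof (sqrt_pos ((1 - A) * t ^ 2 + B)); lra|].
  apply Rplus_le_compat_r, sqrt_le_1_alt.
  assert (t ^ 2 <= u ^ 2) by (apply pow_incr; lra).
  nra.
Qed.

Lemma threshold_ge0 : 0 <= threshold.
Proof. apply sqrt_pos. Qed.

Lemma A_mul_threshold_sqr : A * threshold ^ 2 = D + B.
Proof.
  unfold threshold.
  rewrite pow2_sqrt.
  - field. lra.
  - unfold Rdiv. apply Rmult_le_pos; [lra|].
    apply Rlt_le, Rinv_0_lt_compat; exact A_gt0.
Qed.

Lemma contraction_sqr (t : R) : 2 * threshold <= t ->
  (1 - A) * t ^ 2 + B + D <= ((1 - A / 2) * t + A * threshold) ^ 2.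
Proof.
  intros t_ge.
  pose proof threshold_ge0 as s_ge0.
  pose proof A_mul_threshold_sqr as s_sqr.
  set (s := threshold) in *.
  assert (drift : A * s ^ 2 <= 2 * (1 - A / 2) * A * s * t).
  { assert (0 <= A * s * (t - 2 * s)) by (apply Rmult_le_pos; nra).
    nra. }
  nra.
Qed.

Lemma step_le_affine (t : R) : 2 * threshold <= t ->
  step t <= (1 - A / 2) * t + A * threshold + C.
Proof.
  intros t_ge.
  pose proof threshold_ge0 as s_ge0.
  assert (arg_ge0 : 0 <= (1 - A) * t ^ 2 + B).
  { assert (0 <= t ^ 2) by apply pow2_ge_0. nra. }
  assert (y_ge0 : 0 <= (1 - A / 2) * t + A * threshold) by nra.
  unfold step.
  rewrite <- (sqrt_pow2 ((1 - A / 2) * t + A * threshold + C)) by lra.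
  apply sqrt_le_1_alt, pow2_add_le_of_pow2_le; auto using sqrt_pos.
  rewrite pow2_sqrt by exact arg_ge0.
  apply contraction_sqr, t_ge.
Qed.

Definition envelope (P : R) (k : nat) : R :=
  sqrt 2 * (1 - A / 2) ^ k * P + 2 * sqrt 2 * C / A + 2 * threshold.

Lemma offset_ge0 : 0 <= 2 * sqrt 2 * C / A.
Proof.
  unfold Rdiv. apply Rmult_le_pos.
  - pose proof sqrt2_ge1. nra.
  - apply Rlt_le, Rinv_0_lt_compat; exact A_gt0.
Qed.

Lemma envelope_ge_threshold (P : R) (k : nat) : 0 <= P ->
  2 * threshold <= envelope P k.
Proof.
  intros P_ge0.
  unfold envelope.
  assert (0 <= (1 - A / 2) ^ k) by (apply pow_le; lra).
  assert (0 <= sqrt 2 * (1 - A / 2) ^ k * P).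
  { apply Rmult_le_pos; [apply Rmult_le_pos|]; auto using sqrt_pos. }
  pose proof offset_ge0.
  lra.
Qed.

Lemma le_envelope0 (P : R) : 0 <= P -> P <= envelope P 0.
Proof.
  intros P_ge0.
  unfold envelope. simpl.
  pose proof sqrt2_ge1. pose proof offset_ge0. pose proof threshold_ge0.
  nra.
Qed.

Lemma envelope_S (P : R) (k : nat) :
  envelope P (S k)
  = (1 - A / 2) * envelope P k + A * threshold + sqrt 2 * C.
Proof. unfold envelope. simpl. field. lra. Qed.

Lemma step_envelope (P : R) (k : nat) : 0 <= P ->
  step (envelope P k) <= envelope P (S k).
Proof.
  intros P_ge0.
  apply Rle_trans with ((1 - A / 2) * envelope P k + A * threshold + C).
  - apply step_le_affine, envelope_ge_threshold, P_ge0.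
  - rewrite envelope_S. pose proof sqrt2_ge1. nra.
Qed.

End Recursion.

Theorem lemma11 (r : nat -> R) (A B C D : R)
  (hr : forall k, 0 <= r k)
  (hA0 : 0 < A) (hA1 : A < 1 / 2)
  (hB : 0 <= B) (hC : 0 <= C) (hD : 0 <= D)
  (hrec : forall k,
     (r (S k)) ^ 2 <= (sqrt ((1 - A) * (r k) ^ 2 + B) + C) ^ 2 + D) :
  forall k,
    r k <= sqrt 2 * (1 - A / 2) ^ k * (r 0%nat + sqrt B)
           + 2 * sqrt 2 * C / A + 2 * sqrt ((D + B) / A).
Proof.
  assert (P_ge0 : 0 <= r 0%nat + sqrt B).
  { pose proof (hr 0%nat). pose proof (sqrt_pos B). lra. }
  apply (le_seq_of_monotone_step (step A B C D)
           r (envelope A B C D (r 0%nat + sqrt B))).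
  - apply step_monotone; lra.
  - exact hr.
  - intros k. unfold step.
    rewrite <- (sqrt_pow2 (r (S k))) by apply hr.
    apply sqrt_le_1_alt, hrec.
  - intros k. apply step_envelope; lra.
  - transitivity (r 0%nat + sqrt B).
    + pose proof (sqrt_pos B). lra.
    + apply le_envelope0; lra.
Qed.
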